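(* Let $\widetilde Y\in\mathbb{R}^{m\times N}$ have nonzero columns $\widetilde Y_1,\dots,\widetilde Y_N$ and let $\widetilde w\in\mathbb{R}^N$ be a deterministic vector (e.g. obtained from a data-alignment step that does not use the quantizer randomness). Run Phase II with the infinite alphabet $\mathcal A_\infty^\delta$: $\widetilde u_0=0$ and for $t=1,\dots,N$, $\widetilde q_t=\mathcal{Q}_{\mathrm{StocQ}}\bigl(\widetilde w_t+\langle\widetilde Y_t,\widetilde u_{t-1}\rangle/\|\widetilde Y_t\|_2^2\bigr)$, $\widetilde u_t=\widetilde u_{t-1}+(\widetilde w_t-\widetilde q_t)\widetilde Y_t$, so that $\widetilde u_N=\widetilde Y(\widetilde w-\widetilde q)$. Then for every $p\in\mathbb N$, $$\|\widetilde u_N\|_2\le \delta\sqrt{2\pi p m\log N}\,\max_{1\le j\le N}\|\widetilde Y_j\|_2$$ holds with probability at least $1-\sqrt2\, m/N^{p}$.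
   Context: $\mathcal A_\infty^\delta=\{k\delta:k\in\mathbb Z\}$ with $\delta>0$. The stochastic quantizer $\mathcal{Q}_{\mathrm{StocQ}}:\mathbb R\to\mathcal A_\infty^\delta$ returns $\lfloor z/\delta\rfloor\delta$ with probability $1-z/\delta+\lfloor z/\delta\rfloor$ and $(\lfloor z/\delta\rfloor+1)\delta$ otherwise (so $\mathbb E\,\mathcal{Q}_{\mathrm{StocQ}}(z)=z$); each call uses fresh randomness, independent of everything else given its argument. *)

From HB Require Import structures.
From mathcomp Require Import all_boot all_order all_algebra.
From mathcomp Require Import all_classical all_reals all_analysis.
Set Implicit Arguments. Unset Strict Implicit. Unset Printing Implicit Defensive.
Import Order.TTheory GRing.Theory Num.Theory.
Local Open Scope ring_scope.

Section StocQ.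
Variables (R : realType) (m N : nat).

Definition dotv (x y : 'cV[R]_m) : R := \sum_(i < m) x i 0 * y i 0.
Definition norm2 (x : 'cV[R]_m) : R := Num.sqrt (\sum_(i < m) x i 0 ^+ 2).

(* 0-indexed access: step k (k = 0..N-1) corresponds to t = k+1 in the paper *)
Definition colk (Y : 'M[R]_(m, N)) (k : nat) : 'cV[R]_m :=
  if @insub nat (fun k => (k < N)%N) (ordinal N) k is Some i then col i Y else 0.
Definition wk (w : 'cV[R]_N) (k : nat) : R :=
  if @insub nat (fun k => (k < N)%N) (ordinal N) k is Some i then w i 0 else 0.
Definition bk (b : {ffun 'I_N -> bool}) (k : nat) : bool :=
  if @insub nat (fun k => (k < N)%N) (ordinal N) k is Some i then b i else false.

(* The randomness of the k-th call of Q_StocQ is encoded by the bit b k: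
   false = round down to floor(z/delta) delta, true = round up to
   (floor(z/delta)+1) delta.  state k = (u_k, probability of the bit prefix). *)
Fixpoint phase2_state (delta : R) (Y : 'M[R]_(m, N)) (w : 'cV[R]_N)
    (b : {ffun 'I_N -> bool}) (k : nat) : 'cV[R]_m * R :=
  match k with
  | 0 => (0, 1)
  | k'.+1 =>
      let (u, pw) := phase2_state delta Y w b k' in
      let Yt := colk Y k' in
      let z := wk w k' + dotv Yt u / (norm2 Yt ^+ 2) in
      let fl := Num.floor (z / delta) in
      let up := bk b k' in
      let q := (fl%:~R + (up : nat)%:R) * delta in
      let pr := if up then z / delta - fl%:~R else 1 - (z / delta - fl%:~R) in
      (u + (wk w k' - q) *: Yt, pw * pr)
  end.

Definition phase2_uN delta Y w b : 'cV[R]_m := (phase2_state delta Y w b N).1.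
Definition phase2_weight delta Y w b : R := (phase2_state delta Y w b N).2.

Definition phase2_prob delta Y w (E : pred 'cV[R]_m) : R :=
  \sum_(b : {ffun 'I_N -> bool} | E (phase2_uN delta Y w b))
     phase2_weight delta Y w b.

Definition max_col_norm (Y : 'M[R]_(m, N)) : R :=
  \big[Num.max/0]_(j < N) norm2 (col j Y).

End StocQ.

From HB Require Import structures.
From mathcomp Require Import all_boot all_order all_algebra.
From mathcomp Require Import all_classical all_reals all_analysis.
From mathcomp Require Import lra ring.
Import Order.TTheory GRing.Theory Num.Theory.
Set Implicit Arguments. Unset Strict Implicit.
Local Open Scope ring_scope.

(* Fix a test vector [x] and pull it back through the steps of Phase II:
   [dir N = x] and [dir k] is the rejection of [dir k.+1] from [Y_k].  One step
   maps [u] to its rejection from [Y_k] plus [delta (f - B) Y_k], where [B] is a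
   Bernoulli([f]) bit, so [<dir k.+1, u_k.+1> = <dir k, u_k> + delta (f - B) c_k]
   with [c_k = <dir k.+1, Y_k>].  Since [E exp (t (f - B)) <= exp (2/3 t^2)], the
   process [exp (<dir k, u_k> + 2/3 delta^2 sum_(j >= k) c_j^2)] is a
   supermartingale, and [c_j^2 <= |Y_j|^2 (|dir j.+1|^2 - |dir j|^2)] telescopes to
   [sum c_j^2 <= max |Y_j|^2 |x|^2].  Thus [<x, u_N>] is sub-Gaussian; Chernoff
   bounds on the [2 m] signed coordinates of [u_N] and a union bound give the tail
   estimate. *)

Section ExpBounds.
Variable R : realType.
Implicit Types t x y : R.

Lemma expR_convex t x y : 0 <= t <= 1 ->
  expR (t * x + (1 - t) * y) <= t * expR x + (1 - t) * expR y.
Proof. by move=> /andP[t0 t1]; have := convex_expR (Itv01 t0 t1) x y; rewrite !convRE. Qed.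

Definition coshR y := (expR y + expR (- y)) / 2.

Lemma coshR_ge0 y : 0 <= coshR y.
Proof. by rewrite divr_ge0 // addr_ge0 // expR_ge0. Qed.

Lemma coshR_double y : coshR (2 * y) = 2 * coshR y ^+ 2 - 1.
Proof.
have eyNy : expR y * expR (- y) = 1 by rewrite -expRD subrr expR0.
have -> : 2 * y = y + y by ring.
rewrite /coshR opprD !expRD.
move: eyNy; set A := expR y; set B := expR (- y) => eyNy.
have -> : 2 * ((A + B) / 2) ^+ 2 - 1 = (A * A + B * B) / 2 + (A * B - 1) by field.
by rewrite eyNy subrr addr0.
Qed.

(* For [h = y / 4] the bounds [expR h <= (1 - h)^-1] and [expR (- h) <= (1 + h)^-1]
   reduce the claim to a polynomial inequality in [h ^+ 2]. *)
Lemma coshR_le_small y : `|y| <= 1/4 -> coshR y <= expR (2/3 * y ^+ 2).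
Proof.
rewrite ler_norml => /andP[y_ge y_le].
set h := y / 4.
have h1 : 0 < 1 - h by rewrite /h; lra.
have h2 : 0 < 1 + h by rewrite /h; lra.
have eh : expR h <= (1 - h)^-1.
  by rewrite -[expR h]invrK lef_pV2 ?posrE ?invr_gt0 ?expR_gt0 // -expRN expR_ge1Dx.
have eNh : expR (- h) <= (1 + h)^-1.
  rewrite -[expR (- h)]invrK lef_pV2 ?posrE ?invr_gt0 ?expR_gt0 //.
  by rewrite -expRN opprK expR_ge1Dx.
have yE : y = 4%:R * h by rewrite /h mulrC divfK.
apply: le_trans (expR_ge1Dx _).
rewrite /coshR yE -mulrN !expRM_natl.
apply: (@le_trans _ _ (((1 - h)^-1 ^+ 4 + (1 + h)^-1 ^+ 4) / 2)).
  by rewrite ler_pM2r // lerD // lerXn2r // ?nnegrE ?expR_ge0 // invr_ge0 ltW.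
have -> : ((1 - h)^-1 ^+ 4 + (1 + h)^-1 ^+ 4) / 2 =
  ((1 + h) ^+ 4 + (1 - h) ^+ 4) / (2 * ((1 - h) * (1 + h)) ^+ 4).
  by field; rewrite ?gt_eqF // ?mulr_gt0.
rewrite ler_pdivrMr ?mulr_gt0 ?exprn_gt0 ?mulr_gt0 //.
set t := h ^+ 2.
have t0 : 0 <= t by rewrite sqr_ge0.
have t1 : t <= 1/256 by rewrite /t /h; nra.
have -> : (1 + h) ^+ 4 + (1 - h) ^+ 4 = 2 + 12 * t + 2 * t ^+ 2 by rewrite /t; ring.
have -> : (1 + 2 / 3 * (4%:R * h) ^+ 2) * (2 * ((1 - h) * (1 + h)) ^+ 4)
   = 2 * (1 + 32/3 * t) * (1 - t) ^+ 4 by rewrite /t; ring.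
have : 1 - 4 * t <= (1 - t) ^+ 4 by nra.
nra.
Qed.

(* [coshR (2 y) = 2 coshR y ^+ 2 - 1] and [2 e ^+ 2 - 1 <= e ^+ 4] propagate the
   bound from [`|y| <= r] to [`|y| <= 2 r]. *)
Lemma coshR_le_double r :
  (forall y, `|y| <= r -> coshR y <= expR (2/3 * y ^+ 2)) ->
  forall y, `|y| <= 2 * r -> coshR y <= expR (2/3 * y ^+ 2).
Proof.
move=> small y y_le.
have y2_le : `|y / 2| <= r by rewrite normrM (@gtr0_norm _ 2^-1) //; lra.
have := small _ y2_le; set e := expR _ => cosh_le.
have e0 : 0 < e by rewrite expR_gt0.
have cosh2_le : coshR (y / 2) ^+ 2 <= e ^+ 2.
  by rewrite lerXn2r // ?nnegrE ?coshR_ge0 // ltW.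
have -> : y = 2 * (y / 2) by field.
rewrite coshR_double.
have -> : expR (2 / 3 * (2 * (y / 2)) ^+ 2) = (e ^+ 2) ^+ 2.
  by rewrite -exprM /e -expRM_natl; congr expR; ring.
have : 0 <= (e ^+ 2 - 1) ^+ 2 by rewrite sqr_ge0.
move: cosh2_le; set c := coshR _ ^+ 2; set d := e ^+ 2; nra.
Qed.

Lemma coshR_le_expR_sqr y : coshR y <= expR (2/3 * y ^+ 2).
Proof.
have [y_ge|y_lt] := leP (3/2) `|y|; last first.
  by apply: (coshR_le_double (coshR_le_double (coshR_le_double coshR_le_small))); lra.
have y_sq : `|y| <= 2/3 * y ^+ 2.
  by rewrite -real_normK ?num_real // expr2 mulrA ler_peMl //; lra.
rewrite /coshR ler_pdivrMr // mulr_natr mulr2n.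
rewrite lerD // ler_expR; apply: le_trans y_sq; first exact: ler_norm.
by rewrite -normrN ler_norm.
Qed.

(* Hoeffding-type bound for the centred Bernoulli variable [f - B], [B ~ Ber f]:
   both exponents are convex combinations of [y] and [- y]. *)
Lemma centered_bernoulli_mgf_le f y : 0 <= f <= 1 ->
  (1 - f) * expR (f * y) + f * expR ((f - 1) * y) <= expR (2/3 * y ^+ 2).
Proof.
move=> /andP[f0 f1].
apply: le_trans (coshR_le_expR_sqr y).
have e1 : expR (f * y) <= (1 + f) / 2 * expR y + (1 - (1 + f) / 2) * expR (- y).
  have -> : f * y = (1 + f) / 2 * y + (1 - (1 + f) / 2) * (- y) by field.
  by apply: expR_convex; apply/andP; split; lra.
have e2 : expR ((f - 1) * y) <= f / 2 * expR y + (1 - f / 2) * expR (- y).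
  have -> : (f - 1) * y = f / 2 * y + (1 - f / 2) * (- y) by field.
  by apply: expR_convex; apply/andP; split; lra.
have := ler_wpM2l (_ : 0 <= 1 - f) e1; have := ler_wpM2l f0 e2.
rewrite /coshR; set A := expR y; set B := expR (- y); nra.
Qed.

End ExpBounds.

Section Vectors.
Variables (R : realType) (m : nat).
Implicit Types (x y u v : 'cV[R]_m) (s : R).

Definition sqnorm v : R := \sum_(i < m) v i 0 ^+ 2.

Definition reject y v : 'cV[R]_m := v - (dotv v y / sqnorm y) *: y.

Lemma sqnorm_ge0 v : 0 <= sqnorm v.
Proof. by apply: sumr_ge0 => i _; rewrite sqr_ge0. Qed.

Lemma sqnorm_eq0 v : (sqnorm v == 0) = (v == 0).
Proof.
apply/idP/eqP => [/eqP v0|->]; last by rewrite /sqnorm big1 // => i _; rewrite mxE expr0n.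
apply/matrixP => i j; rewrite (ord1 j) mxE.
have /(psumr_eq0P (fun i _ => sqr_ge0 (v i 0)))/(_ i isT)/eqP := v0.
by rewrite sqrf_eq0 => /eqP.
Qed.

Lemma norm2_sqr v : norm2 v ^+ 2 = sqnorm v.
Proof. by rewrite sqr_sqrtr // sqnorm_ge0. Qed.

Lemma dotvC x y : dotv x y = dotv y x.
Proof. by apply: eq_bigr => i _; rewrite mulrC. Qed.

Lemma dotvDr x y v : dotv x (y + v) = dotv x y + dotv x v.
Proof. by rewrite /dotv -big_split; apply: eq_bigr => i _; rewrite mxE mulrDr. Qed.

Lemma dotvBr x y v : dotv x (y - v) = dotv x y - dotv x v.
Proof. by rewrite /dotv -sumrB; apply: eq_bigr => i _; rewrite !mxE mulrBr. Qed.

Lemma dotvZr s x y : dotv x (s *: y) = s * dotv x y.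
Proof. by rewrite /dotv mulr_sumr; apply: eq_bigr => i _; rewrite mxE mulrCA. Qed.

Lemma dotv0r x : dotv x 0 = 0.
Proof. by rewrite /dotv big1 // => i _; rewrite mxE mulr0. Qed.

Lemma dotv_reject x y u : dotv x (reject y u) = dotv (reject y x) u.
Proof. by rewrite [RHS]dotvC !dotvBr !dotvZr (dotvC u x); ring. Qed.

Lemma reject0 v : reject 0 v = v.
Proof. by rewrite /reject scaler0 subr0. Qed.

Lemma sqnorm_reject y v : y != 0 ->
  sqnorm (reject y v) = sqnorm v - dotv v y ^+ 2 / sqnorm y.
Proof.
rewrite -sqnorm_eq0 => y0; rewrite /reject.
set c := dotv v y / sqnorm y.
have -> : sqnorm (v - c *: y) = sqnorm v - 2 * c * dotv v y + c ^+ 2 * sqnorm y.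
  rewrite /sqnorm /dotv !mulr_sumr -sumrB -big_split /=.
  by apply: eq_bigr => i _; rewrite !mxE; ring.
by rewrite /c; field.
Qed.

Lemma dotv_scale_delta s i u : dotv (s *: delta_mx i 0) u = s * u i 0.
Proof.
rewrite /dotv (bigD1 i) //= big1 => [|j ji]; last by rewrite !mxE (negbTE ji) mulr0 mul0r.
by rewrite !mxE !eqxx mulr1 addr0.
Qed.

Lemma sqnorm_scale_delta s i : sqnorm (s *: delta_mx i 0) = s ^+ 2.
Proof.
rewrite /sqnorm (bigD1 i) //= big1 => [|j ji]; last by rewrite !mxE (negbTE ji) mulr0 expr0n.
by rewrite !mxE !eqxx mulr1 addr0.
Qed.

Lemma norm2_le_coord u a : (forall i, `|u i 0| <= a) -> norm2 u <= Num.sqrt (m%:R * a ^+ 2).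
Proof.
move=> ua; rewrite ler_sqrt; last by rewrite mulr_ge0 ?sqr_ge0.
apply: le_trans (_ : \sum_(i < m) a ^+ 2 <= _); last by rewrite sumr_const card_ord mulr_natl.
apply: ler_sum => i _; have a0 := le_trans (normr_ge0 _) (ua i).
by rewrite -real_normK ?num_real // lerXn2r ?nnegrE ?normr_ge0 ?ua.
Qed.

End Vectors.

Section BitDrivenChain.
Variables (R : realType) (T : Type) (N : nat).
Variables (x0 : T) (next : nat -> T -> bool -> T) (prob : nat -> T -> bool -> R).
Hypothesis prob_ge0 : forall k x c, 0 <= prob k x c.
Hypothesis prob_sum1 : forall k x, prob k x false + prob k x true = 1.
Implicit Types (b : {ffun 'I_N -> bool}) (G : T -> R).

Fixpoint chain b k : T * R :=
  if k is k'.+1 then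
    let (x, pw) := chain b k' in (next k' x (bk b k'), pw * prob k' x (bk b k'))
  else (x0, 1).

Definition chain_expect k G : R := \sum_b (chain b k).2 * G (chain b k).1.

Definition chain_prob (E : pred T) : R := \sum_(b | E (chain b N).1) (chain b N).2.

Lemma chainS b k : chain b k.+1 =
  (next k (chain b k).1 (bk b k), (chain b k).2 * prob k (chain b k).1 (bk b k)).
Proof. by rewrite /=; case: (chain b k). Qed.

Lemma chain_weight_ge0 b k : 0 <= (chain b k).2.
Proof. by elim: k => [|k IH]; rewrite ?chainS ?mulr_ge0. Qed.

Lemma bk_ord b k (kN : (k < N)%N) : bk b k = b (Ordinal kN).
Proof. by rewrite /bk insubT. Qed.

Lemma chain_prefix b b' k : (forall i : 'I_N, (i < k)%N -> b i = b' i) ->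
  chain b k = chain b' k.
Proof.
elim: k => [//|k IH] bb'; rewrite !chainS IH => [|i ik]; last by rewrite bb' // ltnW.
case: (ltnP k N) => [kN|Nk]; first by rewrite !(bk_ord _ kN) bb'.
by rewrite /bk !insubF // ltnNge Nk.
Qed.

Definition flip (i : 'I_N) b : {ffun 'I_N -> bool} := [ffun j => (j == i) (+) b j].

Lemma flipK i : involutive (flip i).
Proof. by move=> b; apply/ffunP => j; rewrite !ffunE addKb. Qed.

Lemma sum_flip i (F : {ffun 'I_N -> bool} -> R) :
  \sum_b F b = \sum_(b : {ffun 'I_N -> bool} | ~~ b i) (F b + F (flip i b)).
Proof.
rewrite (bigID (fun b : {ffun 'I_N -> bool} => b i)) /= big_split /= addrC; congr (_ + _).
rewrite (reindex_inj (inv_inj (flipK i))) /=.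
by apply: eq_bigl => b; rewrite ffunE eqxx.
Qed.

(* Pairing each path with the one differing only in bit [k] averages the next
   step against [prob k]. *)
Lemma chain_expect_step k G G' : (k < N)%N ->
  (forall x, prob k x false * G' (next k x false) + prob k x true * G' (next k x true)
     <= G x) ->
  2 * chain_expect k.+1 G' <= chain_expect k G.
Proof.
move=> kN step; set i := Ordinal kN.
rewrite /chain_expect (sum_flip i) [leRHS](sum_flip i) mulr_sumr.
apply: ler_sum => b bi; rewrite !chainS.
have -> : chain (flip i b) k = chain b k.
  apply: chain_prefix => j jk; rewrite ffunE; case: eqP => // ji.
  by move: jk; rewrite ji ltnn.
rewrite !(bk_ord _ kN) -/i ffunE eqxx (negbTE bi) /=.
have := ler_wpM2l (chain_weight_ge0 b k) (step (chain b k).1).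
set pw := (chain b k).2; set x := (chain b k).1.
set A := prob k x false * _; set B := prob k x true * _.
have -> : pw * prob k x false * G' (next k x false) + pw * prob k x true * G' (next k x true)
  = pw * (A + B) by rewrite /A /B; ring.
lra.
Qed.

Lemma chain_expect0 G : chain_expect 0 G = (2 ^ N)%:R * G x0.
Proof.
rewrite /chain_expect /=; under eq_bigr do rewrite mul1r.
by rewrite sumr_const card_ffun card_bool card_ord mulr_natl.
Qed.

Lemma chain_expect_supermartingale (G : nat -> T -> R) :
  (forall k x, (k < N)%N ->
     prob k x false * G k.+1 (next k x false) + prob k x true * G k.+1 (next k x true)
       <= G k x) ->
  chain_expect N (G N) <= G 0%N x0.
Proof.
move=> step.
suff le_k k : (k <= N)%N -> (2 ^ k)%:R * chain_expect k (G k) <= (2 ^ N)%:R * G 0%N x0.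
  by have := le_k N (leqnn N); rewrite ler_pM2l // ltr0n expn_gt0.
elim: k => [_|k IH kN]; first by rewrite mul1r chain_expect0.
apply: le_trans (IH (ltnW kN)).
rewrite expnS natrM -mulrA mulrCA ler_pM2l ?ltr0n ?expn_gt0 //.
exact: chain_expect_step (step k ^~ kN).
Qed.

Lemma chain_total_weight : \sum_b (chain b N).2 = 1.
Proof.
have expect1 c : chain_expect N (fun=> c) = c * \sum_b (chain b N).2.
  by rewrite mulr_sumr; apply: eq_bigr => b _; rewrite mulrC.
have const_le c : chain_expect N (fun=> c) <= c.
  by apply: (@chain_expect_supermartingale (fun _ _ => c)) => k x _; rewrite -mulrDl prob_sum1 mul1r.
apply/eqP; rewrite eq_le; apply/andP; split.
  by have := const_le 1; rewrite expect1 mul1r.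
by have := const_le (-1); rewrite expect1 mulN1r lerN2.
Qed.

Lemma chain_expectD k G G' :
  chain_expect k (fun x => G x + G' x) = chain_expect k G + chain_expect k G'.
Proof. by rewrite /chain_expect -big_split; apply: eq_bigr => b _; rewrite mulrDr. Qed.

Lemma chain_expectZ k c G : chain_expect k (fun x => c * G x) = c * chain_expect k G.
Proof. by rewrite /chain_expect mulr_sumr; apply: eq_bigr => b _; rewrite mulrCA. Qed.

Lemma chain_expect_sum k n (F : 'I_n -> T -> R) :
  chain_expect k (fun x => \sum_(i < n) F i x) = \sum_(i < n) chain_expect k (F i).
Proof.
rewrite /chain_expect exchange_big /=.
by apply: eq_bigr => b _; rewrite mulr_sumr.
Qed.

Lemma chain_prob_ge0 E : 0 <= chain_prob E.
Proof. by apply: sumr_ge0 => b _; exact: chain_weight_ge0. Qed.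

Lemma chain_markov (E : pred T) (S : T -> R) :
  (forall x, 0 <= S x) -> (forall x, ~~ E x -> 1 <= S x) ->
  1 - chain_expect N S <= chain_prob E.
Proof.
move=> S0 S1.
rewrite -chain_total_weight (bigID (fun b => E (chain b N).1)) /= -/(chain_prob E).
rewrite -addrA gerDl subr_le0.
apply: (@le_trans _ _ (\sum_(b | ~~ E (chain b N).1) (chain b N).2 * S (chain b N).1)).
  apply: ler_sum => b nE; rewrite -[leLHS]mulr1 ler_wpM2l ?chain_weight_ge0 //.
  exact: S1.
rewrite /chain_expect [leRHS](bigID (fun b => E (chain b N).1)) /= lerDr.
by apply: sumr_ge0 => b _; rewrite mulr_ge0 ?chain_weight_ge0.
Qed.

End BitDrivenChain.

Section PhaseII.
Variables (R : realType) (m N : nat) (delta : R) (Y : 'M[R]_(m, N)) (w : 'cV[R]_N).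
Implicit Types (u x : 'cV[R]_m) (k : nat) (up : bool).

Definition qarg k u := wk w k + dotv (colk Y k) u / norm2 (colk Y k) ^+ 2.

Definition up_prob k u := qarg k u / delta - (Num.floor (qarg k u / delta))%:~R.

Definition qstep k u up : 'cV[R]_m :=
  u + (wk w k - ((Num.floor (qarg k u / delta))%:~R + (up : nat)%:R) * delta) *: colk Y k.

Definition qprob k u up := if up then up_prob k u else 1 - up_prob k u.

Lemma up_prob_ge0 k u : 0 <= up_prob k u.
Proof. by rewrite subr_ge0 floor_le. Qed.

Lemma up_prob_le1 k u : up_prob k u <= 1.
Proof.
have := floorD1_gt (qarg k u / delta).
by rewrite /up_prob lerBlDl intrD => /ltW.
Qed.

Lemma qprob_ge0 k u up : 0 <= qprob k u up.
Proof. by case: up; [exact: up_prob_ge0 | rewrite /qprob subr_ge0; exact: up_prob_le1]. Qed.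

Lemma qprob_sum1 k u : qprob k u false + qprob k u true = 1.
Proof. by rewrite /qprob subrK. Qed.

Local Notation phase2 := (chain (0 : 'cV[R]_m) qstep qprob).
Local Notation expect := (chain_expect N (0 : 'cV[R]_m) qstep qprob).

Lemma phase2_stateE b k : phase2_state delta Y w b k = phase2 b k.
Proof. by elim: k => //= k ->; case: (phase2 b k). Qed.

Lemma phase2_probE (E : pred 'cV[R]_m) :
  phase2_prob delta Y w E = chain_prob N 0 qstep qprob E.
Proof.
rewrite /phase2_prob /phase2_uN /phase2_weight /chain_prob.
by apply: eq_big => [b|b _]; rewrite phase2_stateE.
Qed.

Lemma qstep_reject k u up : delta != 0 ->
  qstep k u up = reject (colk Y k) u + (delta * (up_prob k u - (up : nat)%:R)) *: colk Y k.
Proof.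
move=> d0; rewrite /qstep /reject -addrA; congr (_ + _).
rewrite -[in RHS]scaleNr -scalerDl /up_prob /qarg norm2_sqr; congr (_ *: _).
by rewrite (dotvC (colk Y k) u); set c := dotv u _ / _; field.
Qed.

Section LinearFunctional.
Variable x : 'cV[R]_m.

Definition dir k : 'cV[R]_m := foldr (fun j v => reject (colk Y j) v) x (iota k (N - k)).

Definition incr k := dotv (dir k.+1) (colk Y k).

Definition potential k u :=
  expR (dotv (dir k) u + 2/3 * delta ^+ 2 * \sum_(k <= j < N) incr j ^+ 2).

Lemma dirN : dir N = x.
Proof. by rewrite /dir subnn. Qed.

Lemma dirS k : (k < N)%N -> dir k = reject (colk Y k) (dir k.+1).
Proof. by move=> kN; rewrite /dir -subnSK. Qed.

Lemma dotv_dir_qstep k u up : delta != 0 -> (k < N)%N ->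
  dotv (dir k.+1) (qstep k u up) =
  dotv (dir k) u + delta * (up_prob k u - (up : nat)%:R) * incr k.
Proof.
move=> d0 kN.
by rewrite qstep_reject // dotvDr dotv_reject -dirS // dotvZr.
Qed.

Lemma potential_step k u : delta != 0 -> (k < N)%N ->
  qprob k u false * potential k.+1 (qstep k u false) +
  qprob k u true * potential k.+1 (qstep k u true) <= potential k u.
Proof.
move=> d0 kN; rewrite /potential [in leRHS]big_ltn // !dotv_dir_qstep // /qprob /=.
have := up_prob_ge0 k u; have := up_prob_le1 k u.
set f := up_prob k u; set D := dotv (dir k) u; set c := incr k; move=> f1 f0.
set P := 2 / 3 * delta ^+ 2 * \sum_(k.+1 <= j < N) incr j ^+ 2.
have -> : expR (D + delta * (f - 0) * c + P) = expR (D + P) * expR (f * (delta * c)).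
  by rewrite -expRD; congr expR; ring.
have -> : expR (D + delta * (f - 1) * c + P) = expR (D + P) * expR ((f - 1) * (delta * c)).
  by rewrite -expRD; congr expR; ring.
have -> : expR (D + 2 / 3 * delta ^+ 2 * (c ^+ 2 + \sum_(k.+1 <= j < N) incr j ^+ 2)) =
    expR (D + P) * expR (2/3 * (delta * c) ^+ 2).
  by rewrite -expRD; congr expR; rewrite /P; ring.
set E := expR (D + P); set A := expR (f * _); set B := expR ((f - 1) * _).
have -> : (1 - f) * (E * A) + f * (E * B) = E * ((1 - f) * A + f * B) by ring.
rewrite ler_wpM2l ?expR_ge0 //.
by apply: centered_bernoulli_mgf_le; rewrite f0 f1.
Qed.

Lemma sum_incr_sqr_le M2 : 0 <= M2 -> (forall j, (j < N)%N -> sqnorm (colk Y j) <= M2) ->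
  \sum_(0 <= j < N) incr j ^+ 2 <= M2 * sqnorm x.
Proof.
move=> M20 colM.
have incr_le j : (0 <= j < N)%N -> incr j ^+ 2 <= M2 * (sqnorm (dir j.+1) - sqnorm (dir j)).
  move=> /andP[_ jN]; rewrite (dirS jN) /incr.
  have [->|Y0] := eqVneq (colk Y j) 0.
    by rewrite reject0 subrr mulr0 dotv0r expr0n.
  rewrite sqnorm_reject // opprB addrC subrK.
  have q0 : 0 < sqnorm (colk Y j) by rewrite lt0r sqnorm_eq0 Y0 sqnorm_ge0.
  set q := sqnorm _ in q0 *; set d := dotv _ _.
  have dq : d ^+ 2 = q * (d ^+ 2 / q) by field; rewrite gt_eqF.
  by rewrite [leLHS]dq ler_wpM2r ?divr_ge0 ?sqr_ge0 ?sqnorm_ge0 ?colM.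
apply: le_trans (ler_sum_nat incr_le) _.
rewrite -mulr_sumr telescope_sumr // dirN ler_wpM2l //.
by rewrite gerBl sqnorm_ge0.
Qed.

Lemma phase2_mgf_le M2 : delta != 0 -> 0 <= M2 ->
  (forall j, (j < N)%N -> sqnorm (colk Y j) <= M2) ->
  expect N (fun u => expR (dotv x u)) <= expR (2/3 * delta ^+ 2 * (M2 * sqnorm x)).
Proof.
move=> d0 M20 colM.
have := chain_expect_supermartingale (0 : 'cV[R]_m) qprob_ge0 (G := potential)
  (fun k u kN => @potential_step k u d0 kN).
have -> : potential N = fun u => expR (dotv x u).
  by apply/funext => u; rewrite /potential big_geq // dirN mulr0 addr0.
move/le_trans; apply.
rewrite /potential dotv0r add0r ler_expR ler_wpM2l ?sum_incr_sqr_le //.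
by rewrite mulr_ge0 ?sqr_ge0.
Qed.

End LinearFunctional.

(* Chernoff bound on each coordinate of [u_N], with both signs, and a union bound. *)
Lemma phase2_tail M2 a s : delta != 0 -> 0 <= M2 ->
  (forall j, (j < N)%N -> sqnorm (colk Y j) <= M2) -> 0 <= s ->
  1 - 2 * m%:R * expR (2/3 * delta ^+ 2 * M2 * s ^+ 2 - s * a) <=
  phase2_prob delta Y w (fun u => norm2 u <= Num.sqrt (m%:R * a ^+ 2)).
Proof.
move=> d0 M20 colM s0.
set e := expR (- (s * a)).
pose S u := \sum_(i < m) (e * expR (dotv (s *: delta_mx i 0) u) +
                          e * expR (dotv ((- s) *: delta_mx i 0) u)).
have S_ge0 u : 0 <= S u by apply: sumr_ge0 => i _; rewrite addr_ge0 // mulr_ge0 // expR_ge0.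
have S_ge1 u : ~~ (norm2 u <= Num.sqrt (m%:R * a ^+ 2)) -> 1 <= S u.
  move=> far; have [i ai] : exists i, a < `|u i 0|.
    apply/existsP; apply: contraNT far => /existsPn near.
    by apply: norm2_le_coord => i; rewrite leNgt near.
  rewrite /S (bigD1 i) //= !dotv_scale_delta /e -!expRD.
  apply: ler_wpDr; first by apply: sumr_ge0 => j _; rewrite addr_ge0 ?expR_ge0.
  have expR_ge1 y : 0 <= y -> 1 <= expR y by move=> y0; rewrite -expR0 ler_expR.
  case: (lerP 0 (u i 0)) => ui; rewrite ?(ltr0_norm ui) ?(ger0_norm ui) in ai.
    by apply: ler_wpDr; rewrite ?expR_ge0 // expR_ge1 //; nra.
  by apply: ler_wpDl; rewrite ?expR_ge0 // expR_ge1 //; nra.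
rewrite phase2_probE; apply: le_trans _ (chain_markov N 0 qstep qprob_ge0 qprob_sum1 S_ge0 S_ge1).
set X := expR (2/3 * delta ^+ 2 * (M2 * s ^+ 2)).
have mgf_le v : sqnorm v = s ^+ 2 -> expect N (fun u => expR (dotv v u)) <= X.
  by move=> vs; rewrite /X -vs phase2_mgf_le.
rewrite lerD2l lerN2 /S chain_expect_sum.
apply: le_trans (_ : \sum_(i < m) (e * X + e * X) <= _).
  apply: ler_sum => i _; rewrite chain_expectD !chain_expectZ lerD // ler_wpM2l ?expR_ge0 //.
    by rewrite mgf_le ?sqnorm_scale_delta.
  by rewrite mgf_le ?sqnorm_scale_delta ?sqrrN.
rewrite sumr_const card_ord addrC expRD /X -/e -mulr_natl.
by rewrite le_eqVlt; apply/orP; left; apply/eqP; rewrite -!mulrA; ring.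
Qed.

Lemma phase2_gauss_tail M2 lam : 0 < delta -> 0 < M2 ->
  (forall j, (j < N)%N -> sqnorm (colk Y j) <= M2) -> 0 <= lam ->
  1 - 2 * m%:R * expR (- (3/8 * lam)) <=
  phase2_prob delta Y w (fun u => norm2 u <= Num.sqrt (m%:R * (lam * (delta ^+ 2 * M2)))).
Proof.
move=> d0 M20 colM lam0.
set K := delta ^+ 2 * M2; have K0 : 0 < K by rewrite mulr_gt0 ?exprn_gt0.
set a := Num.sqrt (lam * K).
have aa : a ^+ 2 = lam * K by rewrite sqr_sqrtr // mulr_ge0 // ltW.
set s := 3 * a / (4 * K).
have expE : - (3/8 * lam) = 2/3 * delta ^+ 2 * M2 * s ^+ 2 - s * a.
  have lamE : lam = a ^+ 2 / K by rewrite aa mulfK ?gt_eqF.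
  by rewrite /s lamE /K; field; rewrite ?gt_eqF // ?exprn_gt0.
rewrite -aa expE; apply: (@phase2_tail M2 a s (lt0r_neq0 d0) (ltW M20) colM).
by rewrite divr_ge0 ?mulr_ge0 ?sqrtr_ge0 // ltW.
Qed.

Lemma phase2_prob_ge0 E : 0 <= phase2_prob delta Y w E.
Proof. by rewrite phase2_probE chain_prob_ge0 // => k u c; exact: qprob_ge0. Qed.

End PhaseII.

Section Columns.
Variables (R : realType) (m N : nat) (Y : 'M[R]_(m, N)).

Lemma colk_ord j (jN : (j < N)%N) : colk Y j = col (Ordinal jN) Y.
Proof. by rewrite /colk insubT. Qed.

Lemma max_col_norm_ge0 : 0 <= max_col_norm Y.
Proof.
rewrite /max_col_norm; elim/big_ind: _ => //= [x y|i _]; last exact: sqrtr_ge0.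
by rewrite le_max => ->.
Qed.

Lemma le_max_col_norm j : norm2 (col j Y) <= max_col_norm Y.
Proof. by rewrite /max_col_norm (bigD1 j) //= le_max lexx. Qed.

Lemma sqnorm_colk_le j : (j < N)%N -> sqnorm (colk Y j) <= max_col_norm Y ^+ 2.
Proof.
move=> jN; rewrite colk_ord -norm2_sqr lerXn2r ?nnegrE ?sqrtr_ge0 ?max_col_norm_ge0 //.
exact: le_max_col_norm.
Qed.

Lemma max_col_norm_gt0 j : col j Y != 0 -> 0 < max_col_norm Y.
Proof.
move=> Yj; apply: lt_le_trans (le_max_col_norm j).
by rewrite sqrtr_gt0 lt0r sqnorm_eq0 Yj sqnorm_ge0.
Qed.

End Columns.

Lemma dim_gt0_of_col_neq0 (R : realType) m N (Y : 'M[R]_(m, N)) j : col j Y != 0 -> (0 < m)%N.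
Proof. by case: m Y => // Y; rewrite [col j Y]flatmx0 eqxx. Qed.

(* With [2 <= expR P] and [pi >= 2]:
   [2 expR (- 3 pi P / 4) <= 2 expR (- 3 P / 2) <= sqrt 2 expR (- P)]. *)
Lemma two_expR_le_sqrt2 (R : realType) (P : R) : 2 <= expR P ->
  2 * expR (- (3/8 * (2 * pi * P))) <= Num.sqrt 2 / expR P.
Proof.
move=> P2; have P0 : 0 <= P by rewrite -ler_expR expR0; lra.
set E := expR (P / 2); have E0 : 0 < E by rewrite expR_gt0.
have EP : expR P = E ^+ 2 by rewrite /E -expRM_natl; congr expR; field.
apply: (@le_trans _ _ (2 / E ^+ 3)).
  rewrite ler_pM2l // /E -expRM_natl -expRN ler_expR.
  have := @pi_ge2 R; nra.
set r := Num.sqrt (2 : R).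
have r0 : 0 <= r by rewrite sqrtr_ge0.
have rr : r ^+ 2 = 2 by rewrite sqr_sqrtr.
have rE : r <= E by rewrite -(ger0_norm (ltW E0)) -sqrtr_sqr ler_sqrt ?sqr_ge0 // -EP.
rewrite EP -subr_ge0.
have -> : r / E ^+ 2 - 2 / E ^+ 3 = r * (E - r) / E ^+ 3 by rewrite -rr; field; rewrite gt_eqF.
by apply: divr_ge0; [rewrite mulr_ge0 // subr_ge0 | rewrite exprn_ge0 // ltW].
Qed.

Theorem mainTheorem2 (R : realType) (m N : nat) (delta : R)
    (Y : 'M[R]_(m, N)) (w : 'cV[R]_N) (p : nat) :
  (0 < N)%N -> 0 < delta -> (forall j : 'I_N, col j Y != 0) ->
  1 - Num.sqrt 2 * m%:R / (N%:R ^+ p) <=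
  phase2_prob delta Y w
    (fun u => norm2 u <=
       delta * Num.sqrt (2 * pi * p%:R * m%:R * ln N%:R) * max_col_norm Y).
Proof.
move=> N0 d0 Ycol; set M := max_col_norm Y.
have M0 : 0 < M := max_col_norm_gt0 (Ycol (Ordinal N0)).
have Np : N%:R ^+ p = 1 :> R \/ 2 <= N%:R ^+ p :> R.
  rewrite -natrX; have : (0 < N ^ p)%N by rewrite expn_gt0 N0.
  by case: (N ^ p)%N => [|[|n]] // _; [left | right; rewrite ler_nat].
case: Np => [Np1|Np2].
  apply: le_trans (phase2_prob_ge0 _ _ _ _); rewrite Np1 divr1 subr_le0.
  have m1 : 1 <= m%:R :> R by rewrite ler1n (dim_gt0_of_col_neq0 (Ycol (Ordinal N0))).
  have r1 : 1 <= Num.sqrt 2 :> R by rewrite -[leLHS]sqrtr1 ler_sqrt //; lra.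
  nra.
pose P : R := p%:R * ln N%:R.
have NpE : N%:R ^+ p = expR P by rewrite /P expRM_natl lnK // posrE ltr0n.
have lam0 : 0 <= 2 * pi * P by rewrite !mulr_ge0 ?pi_ge0 // ln_ge0 // ler1n.
have thrE : delta * Num.sqrt (2 * pi * p%:R * m%:R * ln N%:R) * M =
    Num.sqrt (m%:R * (2 * pi * P * (delta ^+ 2 * M ^+ 2))).
  rewrite (_ : m%:R * _ = (delta * M) ^+ 2 * (2 * pi * p%:R * m%:R * ln N%:R)); last first.
    by rewrite /P; ring.
  by rewrite [RHS]sqrtrM ?sqr_ge0 // sqrtr_sqr ger0_norm ?mulr_ge0 ?ltW // mulrAC.
rewrite thrE; apply: le_trans (phase2_gauss_tail w d0 (exprn_gt0 2 M0) (sqnorm_colk_le Y) lam0).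
rewrite NpE lerD2l lerN2 [leLHS]mulrAC [leLHS]mulrC [leRHS]mulrAC [leRHS]mulrC.
by rewrite ler_wpM2l // two_expR_le_sqrt2 // -NpE.
Qed.
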